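(* Let $J\in\mathbb{Z}_{>0}$ be not of the form $J = 3^k\prod_i p_i^{l_i}\prod_j q_j^{2m_j}$ (with $k,l_i,m_j\in\mathbb{Z}_{\ge0}$, primes $p_i\equiv1\pmod 3$, primes $q_j\equiv -1\pmod 3$), and suppose $J$ satisfies one of: (1) $J$ is a prime; (2) $J=pq$ where $p,q$ are odd primes with $q>3p$; (3) $J=2p$ where $p$ is an odd prime. Then $\Lambda_h$ has no well-rounded sublattice of index $J$.
   Context: $\Lambda_h = \begin{bmatrix} 1 & -1/2 \\ 0 & \sqrt3/2\end{bmatrix}\mathbb{Z}^2$. A full-rank lattice in $\mathbb{R}^2$ is well-rounded if it has a basis consisting of vectors of minimal nonzero Euclidean norm. The index of a full-rank sublattice $\Gamma\subseteq\Lambda_h$ is $|\Lambda_h:\Gamma|=\det\Gamma/\det\Lambda_h$. *)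

From HB Require Import structures.
From mathcomp Require Import all_boot all_order all_algebra.
From mathcomp Require Import reals.
Set Implicit Arguments. Unset Strict Implicit. Unset Printing Implicit Defensive.
Import Order.TTheory GRing.Theory Num.Theory.
Local Open Scope ring_scope.

Section Lattices.
Variable R : realType.

Definition vnorm (z : R * R) : R := Num.sqrt (z.1 ^+ 2 + z.2 ^+ 2).
Definition det2 (u v : R * R) : R := u.1 * v.2 - u.2 * v.1.

Definition lat (u v : R * R) (z : R * R) : Prop :=
  exists m n : int, z = (m%:~R * u.1 + n%:~R * v.1, m%:~R * u.2 + n%:~R * v.2).

Definition is_basis (L : R * R -> Prop) (u v : R * R) : Prop :=
  det2 u v != 0 /\ forall z, L z <-> lat u v z.

Definition full_rank_lattice (L : R * R -> Prop) : Prop :=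
  exists u v, is_basis L u v.

(* columns of [[1, -1/2], [0, sqrt 3 / 2]] *)
Definition hb1 : R * R := (1, 0).
Definition hb2 : R * R := (- (1 / 2), Num.sqrt 3 / 2).
Definition Lambda_h : R * R -> Prop := lat hb1 hb2.

Definition sublattice_h (L : R * R -> Prop) : Prop :=
  full_rank_lattice L /\ forall z, L z -> Lambda_h z.

(* |Lambda_h : L| = det L / det Lambda_h = J; det of a lattice is |det| of any basis *)
Definition has_index_h (L : R * R -> Prop) (J : nat) : Prop :=
  exists u v, is_basis L u v /\ `|det2 u v| = J%:R * `|det2 hb1 hb2|.

Definition well_rounded (L : R * R -> Prop) : Prop :=
  exists x y, is_basis L x y /\ vnorm x = vnorm y /\
    forall z, L z -> z != (0, 0) -> vnorm x <= vnorm z.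
End Lattices.

Definition special_form (J : nat) : Prop :=
  exists (k : nat) (ps qs : seq (nat * nat)),
    all (fun x => prime x.1 && (x.1 %% 3 == 1)%N) ps /\
    all (fun x => prime x.1 && (x.1 %% 3 == 2)%N) qs /\
    J = (3 ^ k * (\prod_(x <- ps) x.1 ^ x.2) * (\prod_(x <- qs) x.1 ^ (2 * x.2)))%N.

From HB Require Import structures.
From mathcomp Require Import all_boot all_order all_algebra.
From mathcomp Require Import reals.
From mathcomp Require Import finfield zify ring.
Set Implicit Arguments. Unset Strict Implicit. Unset Printing Implicit Defensive.
Import Order.TTheory GRing.Theory Num.Theory.

(* Write lattice vectors in the basis of [Lambda_h]: a b1 + b b2 has squared norm
   N(a, b) = a^2 - ab + b^2.  A well-rounded basis (x, y) of a sublattice of index J has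
   N(x) = N(y) = n and determinant J, and minimality of x against x + y and x - y bounds
   the polar form t of (x, y) by |t| <= n.  The identity 4 n^2 = t^2 + 3 J^2 then forces
   n = J for each listed shape of J, by descent on a prime factor that is large compared
   with its cofactor.  But a J that is not of the special form has a prime divisor
   r = 2 mod 3 with r^2 not dividing J, whereas -3 is not a square mod r, so r | N(a, b)
   implies r | a and r | b, hence r^2 | N(a, b) = J. *)

Lemma special_form_mul (m n : nat) :
  special_form m -> special_form n -> special_form (m * n).
Proof.
move=> [k1 [ps1 [qs1 [hp1 [hq1 ->]]]]] [k2 [ps2 [qs2 [hp2 [hq2 ->]]]]].
exists (k1 + k2), (ps1 ++ ps2), (qs1 ++ qs2).
rewrite !all_cat hp1 hp2 hq1 hq2 !big_cat expnD /=; do 2!split => //; ring.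
Qed.

Lemma prime_mod3_or_special_form (p : nat) : prime p -> p %% 3 = 2 \/ special_form p.
Proof.
move=> p_pr; have [->|p_neq3] := eqVneq p 3.
  by right; exists 1, [::], [::]; rewrite !big_nil.
have p_mod3 : p %% 3 != 0.
  by apply: contra p_neq3 => /(@prime_nt_dvdP 3 p p_pr isT) ->.
case: (ltngtP (p %% 3) 1) => [| | p1]; [lia | | ].
  by have := ltn_pmod p (isT : 0 < 3); left; lia.
right; exists 0, [:: (p, 1)], [::]; rewrite /= p_pr p1 big_cons !big_nil /=.
by do 2!split => //; lia.
Qed.

Lemma prime_sq_ndvd_mul (p q : nat) : prime p -> prime q -> p != q -> ~~ (p ^ 2 %| p * q).
Proof. by move=> p_pr q_pr pq; rewrite expnS expn1 dvdn_pmul2l ?prime_gt0 // dvdn_prime2. Qed.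

Lemma exact_prime_2mod3_divisor (J : nat) :
  ~ special_form J ->
  (prime J \/
   (exists p q : nat, [/\ prime p, prime q, odd p && odd q, (3 * p < q)%N & J = (p * q)%N]) \/
   (exists p : nat, [/\ prime p, odd p & J = (2 * p)%N])) ->
  exists r, [/\ prime r, r %% 3 = 2, r %| J & ~~ (r ^ 2 %| J)].
Proof.
move=> not_special [J_pr | [[p [q [p_pr q_pr _ hpq EJ]]] | [p [p_pr p_odd EJ]]]]; try subst J.
- have [J_mod3 | //] := prime_mod3_or_special_form J_pr.
  exists J; split => //.
  by rewrite -{2}[J]muln1 expnS expn1 dvdn_pmul2l ?prime_gt0 // dvdn1 gtn_eqF ?prime_gt1.
- have p_neq_q : p != q by apply/eqP => pq; lia.
  have [q_mod3 | q_sp] := prime_mod3_or_special_form q_pr.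
    by exists q; split => //; [exact: dvdn_mull | rewrite mulnC prime_sq_ndvd_mul // eq_sym].
  have [p_mod3 | p_sp] := prime_mod3_or_special_form p_pr.
    by exists p; split => //; [exact: dvdn_mulr | exact: prime_sq_ndvd_mul].
  by exfalso; apply: not_special; apply: special_form_mul.
- exists 2; split => //; first exact: dvdn_mulr.
  by apply: prime_sq_ndvd_mul => //; apply: contraTneq p_odd => <-.
Qed.

Lemma prime_dvd_balanced_factors (r s A B : nat) :
  prime r -> 9 * s ^ 2 < r ^ 2 -> A * B = 3 * r ^ 2 * s ^ 2 -> A <= B <= 3 * A ->
  (r %| A) && (r %| B).
Proof.
move=> r_pr hrs hAB /andP[AB BA].
have r_gt0 := prime_gt0 r_pr.
have r2_gt0 : 0 < r ^ 2 by rewrite expn_gt0 r_gt0.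
have : r %| A * B by rewrite hAB -mulnA mulnCA dvdn_mulr // dvdn_exp.
rewrite Euclid_dvdM //; case rA: (r %| A); case rB: (r %| B) => //= _.
- have /dvdnP[k eA] : r ^ 2 %| A.
    rewrite -(@Gauss_dvdl _ _ B); last by apply: coprimeXl; rewrite prime_coprime // rB.
    by rewrite hAB -mulnA mulnCA dvdn_mulr.
  subst A; have k_gt0 : 0 < k.
    by case: (posnP k) BA rB => // ->; rewrite mul0n muln0 leqn0 => /eqP ->; rewrite dvdn0.
  have : k * B = 3 * s ^ 2 by apply/eqP; rewrite -(eqn_pmul2r r2_gt0); apply/eqP; lia.
  nia.
- have /dvdnP[k eB] : r ^ 2 %| B.
    rewrite -(@Gauss_dvdr _ A); last by apply: coprimeXl; rewrite prime_coprime // rA.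
    by rewrite hAB -mulnA mulnCA dvdn_mulr.
  subst B; have k_gt0 : 0 < k.
    by case: (posnP k) AB rA => // ->; rewrite mul0n leqn0 => /eqP ->; rewrite dvdn0.
  have : A * k = 3 * s ^ 2 by apply/eqP; rewrite -(eqn_pmul2r r2_gt0); apply/eqP; lia.
  nia.
Qed.

(* For a basis of index J of equal squared norms n, in hexagonal coordinates, t is the
   absolute value of its polar form (twice the inner product); t <= n says the angle
   between the basis vectors lies in [pi/3, 2pi/3]. *)
Definition norm_rigid (J : nat) : Prop :=
  forall n t : nat, 4 * n ^ 2 = t ^ 2 + 3 * J ^ 2 -> t <= n -> n = J.

Lemma norm_eq_descent (r s n t : nat) :
  prime r -> 0 < s -> 9 * s ^ 2 < r ^ 2 -> 4 * n ^ 2 = t ^ 2 + 3 * (r * s) ^ 2 -> t <= n ->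
  exists n1 t1, [/\ n = r * n1, 4 * n1 ^ 2 = t1 ^ 2 + 3 * s ^ 2 & t1 <= n1].
Proof.
move=> r_pr s_gt0 hrs hn htn.
have r_gt4 : 4 < r.
  have r_neq4 : r != 4 by apply: contraTneq r_pr => ->.
  nia.
have prime_dvd_small_mul k m : 0 < k < r -> r %| k * m -> r %| m.
  move=> /andP[k_gt0 k_lt]; rewrite Gauss_dvdr // prime_coprime //.
  by apply/negP => /(dvdn_leq k_gt0); rewrite leqNgt k_lt.
have /andP[rA rB] : (r %| 2 * n - t) && (r %| 2 * n + t).
  by apply: (prime_dvd_balanced_factors r_pr hrs); [nia | apply/andP; split; lia].
have /dvdnP[n1 en] : r %| n.
  apply: (prime_dvd_small_mul 4); first by apply/andP; split; lia.
  have -> : 4 * n = (2 * n - t) + (2 * n + t) by lia.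
  exact: dvdn_add.
have /dvdnP[t1 et] : r %| t.
  apply: (prime_dvd_small_mul 2); first by apply/andP; split; lia.
  have -> : 2 * t = (2 * n + t) - (2 * n - t) by lia.
  exact: dvdn_sub.
have r2_gt0 : 0 < r ^ 2 by rewrite expn_gt0 prime_gt0.
exists n1, t1; split; first by rewrite en mulnC.
- apply/eqP; rewrite -(eqn_pmul2r r2_gt0); apply/eqP.
  by transitivity (4 * (n1 * r) ^ 2); [ring | rewrite -en hn et; ring].
- by move: htn; rewrite en et leq_pmul2r // prime_gt0.
Qed.

Lemma norm_eq_bounds (J n t : nat) :
  4 * n ^ 2 = t ^ 2 + 3 * J ^ 2 -> t <= n -> n <= J.
Proof.
move=> hn htn; rewrite -(leq_exp2r _ _ (isT : 0 < 2)).
have : t ^ 2 <= n ^ 2 by rewrite leq_exp2r.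
lia.
Qed.

Definition norm_rigidb (J : nat) : bool :=
  all (fun n => all (fun t => (4 * n ^ 2 == t ^ 2 + 3 * J ^ 2) ==> (n == J))
                    (iota 0 n.+1))
      (iota 0 J.+1).

Lemma norm_rigidP (J : nat) : norm_rigidb J -> norm_rigid J.
Proof.
move=> /allP rigJ n t hn htn.
have n_in : n \in iota 0 J.+1 by rewrite mem_iota ltnS (norm_eq_bounds hn htn).
have t_in : t \in iota 0 n.+1 by rewrite mem_iota ltnS.
by have /allP/(_ t t_in) := rigJ n n_in; rewrite hn eqxx => /eqP.
Qed.

Lemma norm_rigid_mul (r s : nat) :
  prime r -> 0 < s -> 9 * s ^ 2 < r ^ 2 -> norm_rigid s -> norm_rigid (r * s).
Proof.
move=> r_pr s_gt0 hrs rig_s n t hn htn.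
have [n1 [t1 [-> hn1 ht1]]] := norm_eq_descent r_pr s_gt0 hrs hn htn.
by rewrite (rig_s _ _ hn1 ht1).
Qed.

Lemma norm_rigid_prime (p : nat) : prime p -> norm_rigid p.
Proof.
move=> p_pr; case: (leqP p 3) => [p_le3 | p_gt3].
  by case: p p_pr p_le3 => [|[|[|[|]]]] // _ _; apply: norm_rigidP.
rewrite -[p]muln1; apply: norm_rigid_mul => //; first nia.
exact: norm_rigidP.
Qed.

Lemma norm_rigid_prime_mul (p q : nat) :
  prime p -> prime q -> 3 * p < q -> norm_rigid (p * q).
Proof.
move=> p_pr q_pr hpq; rewrite mulnC; apply: norm_rigid_mul => //.
- exact: prime_gt0.
- nia.
- exact: norm_rigid_prime.
Qed.

Lemma norm_rigid_double_prime (p : nat) : prime p -> odd p -> norm_rigid (2 * p).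
Proof.
move=> p_pr p_odd; case: (leqP p 6) => [p_le6 | p_gt6].
  by case: p p_pr p_odd p_le6 => [|[|[|[|[|[|[|]]]]]]] // _ _ _; apply: norm_rigidP.
rewrite mulnC; apply: norm_rigid_mul => //; first nia.
exact: norm_rigidP.
Qed.

Local Open Scope ring_scope.

Lemma Fp_sixth_root_free (r : nat) (u : 'F_r) :
  prime r -> (r %% 3 = 2)%N -> u ^+ 2 - u + 1 != 0.
Proof.
move=> r_pr r_mod3; apply/eqP => hu.
have u_neq0 : u != 0.
  by apply/eqP => u0; move: hu; rewrite u0 expr0n subr0 add0r => /eqP; rewrite oner_eq0.
have u3 : u ^+ 3 = -1.
  have : (u + 1) * (u ^+ 2 - u + 1) = 0 by rewrite hu mulr0.
  by move=> h; apply/eqP; rewrite -subr_eq0 opprK -h; apply/eqP; ring.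
have three_neq0 : (3%:R : 'F_r) != 0.
  rewrite -(dvdn_pcharf (pchar_Fp r_pr)); apply/negP.
  by move/(prime_nt_dvdP (isT : prime 3) (negbT (gtn_eqF (prime_gt1 r_pr)))) => r3; rewrite r3 in r_mod3.
(* Fermat: u = u ^+ r = u ^+ (3k + 2) = (-1) ^+ k * u ^+ 2, so u = 1 or u = -1. *)
have card_eq : #|'F_r| = (r %/ 3 * 3 + 2)%N by rewrite card_Fp // {1}(divn_eq r 3) r_mod3.
have := expf_card u; rewrite card_eq exprD mulnC exprM u3.
rewrite -signr_odd; case: (odd _); rewrite ?expr0 ?expr1 => fermat.
- have : u * (u + 1) = 0 by rewrite mulrDr mulr1 -expr2 -{2}fermat; ring.
  move/eqP; rewrite mulf_eq0 (negPf u_neq0) addr_eq0 => /eqP u_m1.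
  by move: three_neq0; rewrite -hu u_m1; apply/negP; rewrite negbK; apply/eqP; ring.
- have : u * (u - 1) = 0 by rewrite mulrBr mulr1 -expr2 -{2}fermat; ring.
  move/eqP; rewrite mulf_eq0 (negPf u_neq0) subr_eq0 => /eqP u1.
  by move: hu; rewrite u1 expr1n subrr add0r => /eqP; rewrite oner_eq0.
Qed.

Definition norm_form (a b : int) : int := a ^+ 2 - a * b + b ^+ 2.

Lemma norm_form_ge0 (a b : int) : 0 <= norm_form a b.
Proof. rewrite /norm_form; nia. Qed.

Lemma prime_2mod3_dvd_norm_form (r : nat) (a b : int) :
  prime r -> (r %% 3 = 2)%N -> (r %| norm_form a b)%Z -> (r %| a)%Z /\ (r %| b)%Z.
Proof.
move=> r_pr r_mod3; have pchar_r := pchar_Fp r_pr.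
rewrite !(dvdz_pcharf pchar_r) => /eqP hN.
set A : 'F_r := a%:~R; set B : 'F_r := b%:~R.
have hAB : A ^+ 2 - A * B + B ^+ 2 = 0 by rewrite -hN /A /B /norm_form; ring.
have B0 : B = 0.
  apply/eqP/negPn/negP => B_neq0.
  have := Fp_sixth_root_free (A / B) r_pr r_mod3.
  have -> : (A / B) ^+ 2 - A / B + 1 = (A ^+ 2 - A * B + B ^+ 2) / B ^+ 2 by field.
  by rewrite hAB mul0r eqxx.
by move: hAB; rewrite B0 mulr0 subr0 expr0n addr0 => /eqP; rewrite expf_eq0 /= => /eqP ->.
Qed.

Lemma prime_2mod3_sq_dvd_norm_form (r : nat) (a b : int) :
  prime r -> (r %% 3 = 2)%N -> (r %| norm_form a b)%Z -> ((r ^ 2)%N %| norm_form a b)%Z.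
Proof.
move=> r_pr r_mod3 /(prime_2mod3_dvd_norm_form r_pr r_mod3)[/dvdzP[a' ->] /dvdzP[b' ->]].
apply/dvdzP; exists (norm_form a' b'); rewrite /norm_form -[(r ^ 2)%N]/(r * r)%N PoszM; ring.
Qed.

Definition polar_form (a b e f : int) : int := 2 * a * e - a * f - b * e + 2 * b * f.

Lemma norm_formD (a b e f : int) :
  norm_form (a + e) (b + f) = norm_form a b + norm_form e f + polar_form a b e f.
Proof. by rewrite /norm_form /polar_form; ring. Qed.

Lemma norm_formB (a b e f : int) :
  norm_form (a - e) (b - f) = norm_form a b + norm_form e f - polar_form a b e f.
Proof. by rewrite /norm_form /polar_form; ring. Qed.

Lemma norm_form_mul (a b e f : int) :
  4 * norm_form a b * norm_form e f = polar_form a b e f ^+ 2 + 3 * (a * f - b * e) ^+ 2.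
Proof. by rewrite /norm_form /polar_form; ring. Qed.

Lemma norm_form_eq_index (J : nat) (a b e f : int) :
  norm_rigid J -> norm_form a b = norm_form e f -> `|a * f - b * e| = J%:Z ->
  `|polar_form a b e f| <= norm_form a b -> norm_form a b = J%:Z.
Proof.
move=> rigJ hN hD hT.
have id4 : 4 * norm_form a b ^+ 2 = polar_form a b e f ^+ 2 + 3 * (J%:Z) ^+ 2.
  by rewrite -hD real_normK ?num_real // -norm_form_mul -hN; ring.
set n := norm_form a b in hT id4 *; set t := polar_form a b e f in hT id4.
have n_nat : n = `|n|%N by rewrite abszE ger0_norm ?norm_form_ge0.
have t_sq : t ^+ 2 = (`|t|%N)%:Z ^+ 2 by rewrite abszE real_normK ?num_real.
rewrite n_nat in id4 hT *; rewrite t_sq in id4; rewrite -abszE in hT.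
congr Posz; apply: (rigJ _ `|t|%N); move: id4 hT; generalize `|n|%N `|t|%N => n' t'; lia.
Qed.

Section Geometry.
Variable R : realType.
Implicit Types (u v x y : R * R) (L : R * R -> Prop).

Definition lcomb u v (m n : int) : R * R :=
  (m%:~R * u.1 + n%:~R * v.1, m%:~R * u.2 + n%:~R * v.2).

Lemma lcomb_lcomb u v (a b e f m n : int) :
  lcomb (lcomb u v a b) (lcomb u v e f) m n = lcomb u v (m * a + n * e) (m * b + n * f).
Proof. by rewrite /lcomb /=; congr pair; rewrite !rmorphD !rmorphM /=; ring. Qed.

Lemma det2_lcomb u v (a b e f : int) :
  det2 (lcomb u v a b) (lcomb u v e f) = (a * f - b * e)%:~R * det2 u v.
Proof. by rewrite /det2 /lcomb /= rmorphB !rmorphM /=; ring. Qed.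

Lemma lcomb_neq0 x y (n : int) : det2 x y != 0 -> lcomb x y 1 n != (0, 0).
Proof.
have -> : det2 x y = det2 (lcomb x y 1 n) y by rewrite /det2 /lcomb /=; ring.
by apply: contra_neq => ->; rewrite /det2 /= !mul0r subr0.
Qed.

Lemma is_basis_lcomb L x y (m n : int) : is_basis L x y -> L (lcomb x y m n).
Proof. by move=> [_ Lxy]; apply/Lxy; exists m, n. Qed.

Lemma is_basis_mem L x y : is_basis L x y -> L x /\ L y.
Proof.
move=> bxy; have [ex ey] : lcomb x y 1 0 = x /\ lcomb x y 0 1 = y.
  by case: x {bxy} => ? ?; case: y => ? ?; rewrite /lcomb /=; split; congr pair; ring.
by rewrite -{1}ex -{2}ey; split; apply: is_basis_lcomb.
Qed.

Lemma int_mul_eq1 (m n : int) : m * n = 1 -> `|m| = 1.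
Proof.
move/(congr1 absz); rewrite abszM => /eqP; rewrite muln_eq1 => /andP[/eqP m1 _].
by rewrite -abszE m1.
Qed.

Lemma is_basis_det2_norm L u v x y :
  is_basis L u v -> is_basis L x y -> `|det2 x y| = `|det2 u v|.
Proof.
move=> buv bxy; have [Lu Lv] := is_basis_mem buv; have [Lx Ly] := is_basis_mem bxy.
have [m1 [n1 ex]] := (proj2 buv x).1 Lx; have [m2 [n2 ey]] := (proj2 buv y).1 Ly.
have [k1 [l1 eu]] := (proj2 bxy u).1 Lu; have [k2 [l2 ev]] := (proj2 bxy v).1 Lv.
have dx : det2 x y = (m1 * n2 - n1 * m2)%:~R * det2 u v by rewrite ex ey det2_lcomb.
have du : det2 u v = (k1 * l2 - l1 * k2)%:~R * det2 x y by rewrite eu ev det2_lcomb.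
have : (m1 * n2 - n1 * m2) * (k1 * l2 - l1 * k2) = 1.
  apply/eqP; rewrite -(eqr_int R) rmorphM /=; apply/eqP; apply: (mulIf (proj1 bxy)).
  by rewrite mul1r -mulrA -du -dx.
by move/int_mul_eq1 => D1; rewrite dx normrM -intr_norm D1 mul1r.
Qed.

Local Notation hpt := (lcomb (hb1 R) (hb2 R)).

Lemma det2_hb : det2 (hb1 R) (hb2 R) = Num.sqrt 3 / 2.
Proof. by rewrite /det2 /=; ring. Qed.

Lemma vnorm_hpt (a b : int) : vnorm (hpt a b) = Num.sqrt (norm_form a b)%:~R.
Proof.
rewrite /vnorm /lcomb /=; congr Num.sqrt.
have sqrt3 : Num.sqrt 3 ^+ 2 = 3 :> R by rewrite sqr_sqrtr ?ler0n.
rewrite /norm_form rmorphD rmorphB rmorphM !rmorphXn /=.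
by rewrite mulr0 add0r exprMn expr_div_n sqrt3; field; rewrite ?pnatr_eq0.
Qed.

Lemma vnorm_hpt_le (a b c d : int) :
  (vnorm (hpt a b) <= vnorm (hpt c d)) = (norm_form a b <= norm_form c d).
Proof. by rewrite !vnorm_hpt ler_sqrt ?ler0z ?norm_form_ge0 // ler_int. Qed.

Lemma vnorm_hpt_inj (a b c d : int) :
  vnorm (hpt a b) = vnorm (hpt c d) -> norm_form a b = norm_form c d.
Proof. by move/eqP; rewrite !vnorm_hpt eqr_sqrt ?ler0z ?norm_form_ge0 // eqr_int => /eqP. Qed.

Lemma well_rounded_polar_le L (a b e f : int) :
  is_basis L (hpt a b) (hpt e f) ->
  (forall z, L z -> z != (0, 0) -> vnorm (hpt a b) <= vnorm z) ->
  norm_form a b = norm_form e f -> `|polar_form a b e f| <= norm_form a b.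
Proof.
move=> bxy xmin hN.
have le_shift (n : int) : norm_form a b <= norm_form (a + n * e) (b + n * f).
  have := xmin _ (is_basis_lcomb 1 n bxy) (lcomb_neq0 n (proj1 bxy)).
  by rewrite lcomb_lcomb !mul1r vnorm_hpt_le.
have := le_shift 1; have := le_shift (-1).
rewrite !mul1r !mulN1r norm_formB norm_formD -hN ler_norml; lia.
Qed.

Lemma hpt_index L u v (J : nat) (a b e f : int) :
  is_basis L u v -> `|det2 u v| = J%:R * `|det2 (hb1 R) (hb2 R)| ->
  is_basis L (hpt a b) (hpt e f) -> `|a * f - b * e| = J%:Z.
Proof.
move=> buv index_uv bxy.
have hb_neq0 : `|det2 (hb1 R) (hb2 R)| != 0.
  by rewrite det2_hb normr_eq0 gt_eqF // divr_gt0 ?sqrtr_gt0 ?ltr0n.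
have := is_basis_det2_norm buv bxy; rewrite index_uv det2_lcomb normrM -intr_norm.
by move/(mulIf hb_neq0); rewrite -[J%:R]/((J%:Z)%:~R) => /intr_inj.
Qed.

End Geometry.

Local Close Scope ring_scope.

Theorem lemma5p4 (R : realType) (J : nat) :
  (0 < J)%N ->
  ~ special_form J ->
  (prime J \/
   (exists p q : nat, [/\ prime p, prime q, odd p && odd q, (3 * p < q)%N & J = (p * q)%N]) \/
   (exists p : nat, [/\ prime p, odd p & J = (2 * p)%N])) ->
  forall L : R * R -> Prop,
    sublattice_h L -> has_index_h L J -> ~ well_rounded L.
Proof.
move=> _ not_special shape L [_ L_sub] [u [v [buv index_uv]]] [x [y [bxy [nxy xmin]]]].
have [r [r_pr r_mod3 r_dvd r2_ndvd]] := exact_prime_2mod3_divisor not_special shape.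
have rigJ : norm_rigid J.
  case: shape => [|[[p [q [p_pr q_pr _ hpq ->]]] | [p [p_pr p_odd ->]]]].
  - exact: norm_rigid_prime.
  - exact: norm_rigid_prime_mul.
  - exact: norm_rigid_double_prime.
have [Lx Ly] := is_basis_mem bxy.
have [a [b ex]] := L_sub x Lx; have [e [f ey]] := L_sub y Ly.
have {}ex : x = lcomb (hb1 R) (hb2 R) a b := ex.
have {}ey : y = lcomb (hb1 R) (hb2 R) e f := ey.
subst x y.
have hN := vnorm_hpt_inj nxy.
have hT := well_rounded_polar_le bxy xmin hN.
have NJ := norm_form_eq_index rigJ hN (hpt_index buv index_uv bxy) hT.
have r_dvd_N : (r %| norm_form a b)%Z by rewrite NJ; exact: r_dvd.
have := prime_2mod3_sq_dvd_norm_form r_pr r_mod3 r_dvd_N.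
by rewrite NJ; exact: (negP r2_ndvd).
Qed.
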